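(* Let $d_1,d_2$ be positive integers and $C>0$. Let $\sigma\in\{+1,-1\}^{2n}$ be a uniformly random labelling of $[2n]$ with exactly $n$ entries equal to $+1$. Let $T$ be a (fixed) tree whose vertices lie in $[2n]$ and which has at most $C\log n$ edges; for an edge $e=\{u,w\}$ of $T$ let $d_e=d_1$ if $\sigma_u=\sigma_w$ and $d_e=d_2$ otherwise. Then $$\mathbb{E}_{\sigma}\Big(\prod_{e\in T}\frac{d_e}{n}\Big)\le\Big(\frac{d_1+d_2}{2n}\Big)^{|T|}\Big(1+O\Big(\frac{(\log n)^2}{n}\Big)\Big),$$ where $|T|$ is the number of edges of $T$, $\mathbb{E}_\sigma$ is expectation over $\sigma$, and the implied constant depends only on $d_1,d_2,C$. *)

From HB Require Import structures.
From mathcomp Require Import all_boot all_order all_algebra.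
From mathcomp Require Import all_classical all_reals.
From mathcomp Require Import exp.
Set Implicit Arguments. Unset Strict Implicit. Unset Printing Implicit Defensive.
Import Order.TTheory GRing.Theory Num.Theory.
Local Open Scope ring_scope.

Section Defs.
Variable m : nat.

Definition adj (E : {set {set 'I_m}}) : rel 'I_m :=
  fun x y => [set x; y] \in E.

Definition verts (E : {set {set 'I_m}}) : {set 'I_m} := finset.cover E.

(* A tree whose vertices lie in [m], given by its edge set E:
   every edge has exactly two endpoints, the graph (verts E, E) is connected,
   and it is acyclic (every edge is a bridge: removing it disconnects
   its endpoints). *)
Definition is_tree (E : {set {set 'I_m}}) : Prop :=
  (forall e, e \in E -> #|e| = 2%N) /\
  (forall u v, u \in verts E -> v \in verts E -> connect (adj E) u v) /\
  (forall u v, [set u; v] \in E -> u != v ->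
       ~~ connect (adj (E :\ [set u; v])) u v).

(* labellings sigma : [m] -> {+1,-1}, encoded as booleans (true = +1) *)
Definition balanced (k : nat) : {set {ffun 'I_m -> bool}} :=
  [set s : {ffun 'I_m -> bool} | #|[set i | s i]| == k].

Definition d_edge (d1 d2 : nat) (s : {ffun 'I_m -> bool}) (e : {set 'I_m}) : nat :=
  if [forall u in e, forall w in e, s u == s w] then d1 else d2.

End Defs.

Definition tree_expect (R : realType) (d1 d2 n : nat)
    (E : {set {set 'I_(2 * n)}}) : R :=
  (#|balanced (2 * n) n|%:R)^-1 *
  \sum_(s in balanced (2 * n) n)
     \prod_(e in E) ((d_edge d1 d2 s e)%:R / n%:R).

From HB Require Import structures.
From mathcomp Require Import all_boot all_order all_algebra all_fingroup.
From mathcomp Require Import all_classical all_reals.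
From mathcomp Require Import exp.
From mathcomp Require Import lra.
Set Implicit Arguments. Unset Strict Implicit. Unset Printing Implicit Defensive.
Import Order.TTheory GRing.Theory Num.Theory.
Local Open Scope ring_scope.

(* Under the uniform labelling of all of [2n], the edge weights of a forest
   are independent: removing an edge and flipping every label on one side of
   it shows that the total weight over all 2^(2n) labellings is exactly
   2^(2n) ((d1+d2)/(2n))^|T|.  Balancing costs little: a function of the labels
   of v vertices has balanced mean at most (2n)^v / (2n)^_v times its uniform
   mean (move one vertex at a time by a transposition with a vertex outside
   the others), and (2n)^v / (2n)^_v <= 1 + v^2/n with v <= 2|T| = O(log n). *)

Lemma sum_mul_involutive (R : numFieldType) (T : finType) (phi : T -> T)
    (w G : T -> R) (c : R) :
  involutive phi -> (forall t, G (phi t) = G t) -> (forall t, w t + w (phi t) = c) ->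
  \sum_t w t * G t = c / 2 * \sum_t G t.
Proof.
move=> phiK Gphi wphi.
have twice : \sum_t w t * G t + \sum_t w t * G t = c * \sum_t G t.
  rewrite [X in _ + X](reindex_inj (inv_inj phiK)) -big_split mulr_sumr /=.
  by apply: eq_bigr => t _; rewrite Gphi -mulrDl wphi.
by rewrite mulrAC -twice mulrDl -splitr.
Qed.

Section Labellings.
Variable m : nat.
Implicit Types (s : {ffun 'I_m -> bool}) (S V : {set 'I_m}).

Definition flip_labels S s : {ffun 'I_m -> bool} := [ffun i => (i \in S) (+) s i].

Lemma flip_labelsK S : involutive (flip_labels S).
Proof. by move=> s; apply/ffunP => i; rewrite !ffunE addbA addbb. Qed.

Definition set_label s x b : {ffun 'I_m -> bool} :=
  [ffun i => if i == x then b else s i].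

Lemma sum_set_label (R : numFieldType) (F : {ffun 'I_m -> bool} -> R) (x : 'I_m) :
  \sum_s (F (set_label s x true) + F (set_label s x false)) = 2 * \sum_s F s.
Proof.
have flip_x s : F (set_label s x true) + F (set_label s x false)
                = F s + F (flip_labels [set x] s).
  have -> : s = set_label s x (s x).
    by apply/ffunP => i; rewrite ffunE; case: eqP => // ->.
  have -> : flip_labels [set x] (set_label s x (s x)) = set_label s x (~~ s x).
    by apply/ffunP => i; rewrite !ffunE inE; case: eqP.
  have set_label_idem b : set_label (set_label s x (s x)) x b = set_label s x b.
    by apply/ffunP => i; rewrite !ffunE; case: eqP.
  by rewrite !set_label_idem; case: (s x); last exact: addrC.
rewrite (eq_bigr _ (fun s _ => flip_x s)) big_split /=.
rewrite [X in _ + X](reindex_inj (inv_inj (flip_labelsK [set x]))) /=.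
by under [X in _ + X]eq_bigr do rewrite flip_labelsK; rewrite mulr_natl mulr2n.
Qed.

Definition depends_only_on {R : Type} V (F : {ffun 'I_m -> bool} -> R) :=
  forall s s', {in V, s =1 s'} -> F s = F s'.

Lemma set_label_depends (R : numFieldType) V (F : {ffun 'I_m -> bool} -> R) (x : 'I_m) :
  depends_only_on V F ->
  depends_only_on (V :\ x) (fun s => F (set_label s x true) + F (set_label s x false)).
Proof.
move=> dF s s' ss'; congr (_ + _); apply: dF => i iV; rewrite !ffunE;
  by case: eqP => // /eqP ix; apply: ss'; rewrite in_setD1 ix.
Qed.

End Labellings.

Section Forests.
Variable m : nat.
Implicit Types (s : {ffun 'I_m -> bool}) (S : {set 'I_m}) (E : {set {set 'I_m}}).

Definition acyclic E :=
  forall u v, [set u; v] \in E -> u != v -> ~~ connect (adj (E :\ [set u; v])) u v.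

Definition forest E := (forall e, e \in E -> #|e| = 2%N) /\ acyclic E.

Lemma tree_forest E : is_tree E -> forest E.
Proof. by case=> edge2 [_ acyc]. Qed.

Lemma adj_sym E : symmetric (adj E).
Proof. by move=> x y; rewrite /adj finset.setUC. Qed.

Lemma forestD1 E e : forest E -> forest (E :\ e).
Proof.
case=> edge2 acyc; split=> [f | u v]; first by rewrite in_setD1 => /andP[_ /edge2].
rewrite in_setD1 => /andP[_ uvE] uv; apply: contra (acyc u v uvE uv).
apply: connect_sub => x y; rewrite /adj !in_setD1 => /and3P[xy _ xyE].
by apply: connect1; rewrite /adj in_setD1 xy xyE.
Qed.

Lemma d_edge_pair d1 d2 s u v : u != v ->
  d_edge d1 d2 s [set u; v] = if s u == s v then d1 else d2.
Proof.
move=> uv; congr (if _ then _ else _); apply/idP/idP.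
  by move/forall_inP/(_ u (set21 u v))/forall_inP/(_ v (set22 u v)).
move=> /eqP suv; apply/forall_inP => a; rewrite !inE => /orP[]/eqP->;
  by apply/forall_inP => b; rewrite !inE => /orP[]/eqP->; rewrite ?suv.
Qed.

Lemma d_edge_flip_labels d1 d2 S s u v : u != v -> (u \in S) = (v \in S) ->
  d_edge d1 d2 (flip_labels S s) [set u; v] = d_edge d1 d2 s [set u; v].
Proof.
move=> uv uvS; rewrite !d_edge_pair // !ffunE uvS.
by case: (v \in S); case: (s u); case: (s v).
Qed.

Lemma d_edge_flip_labels_cut d1 d2 S s u v : u \notin S -> v \in S ->
  (d_edge d1 d2 s [set u; v] + d_edge d1 d2 (flip_labels S s) [set u; v] = d1 + d2)%N.
Proof.
move=> uS vS; have uv : u != v by apply: contraNneq uS => ->.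
rewrite !d_edge_pair // !ffunE (negbTE uS) vS.
by case: (s u); case: (s v) => //=; rewrite addnC.
Qed.

(* Removing an edge uv splits a forest; flipping all labels on the side of v
   exchanges the two possible weights of uv and fixes all other weights. *)
Lemma sum_prod_d_edge_forest (R : numFieldType) d1 d2 (x : R) E : forest E ->
  \sum_s \prod_(e in E) ((d_edge d1 d2 s e)%:R / x)
    = (2 ^ m)%:R * ((d1 + d2)%:R / x / 2) ^+ #|E|.
Proof.
have [k] := ubnP #|E|; elim: k E => // k IH E; rewrite ltnS => cardE forestE.
have [-> | [e eE]] := set_0Vmem E.
  under eq_bigr do rewrite big_set0.
  by rewrite sumr_const card_ffun card_bool card_ord cards0 mulr1.
have [edge2 acyc] := forestE.
have /cards2P [u [v [uv def_e]]] : #|e| == 2%N by rewrite edge2.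
set E' := E :\ e; set w := fun s f => (d_edge d1 d2 s f)%:R / x.
set S := [set y | connect (adj E') v y].
have uS : u \notin S.
  rewrite inE (sym_connect_sym (@adj_sym E')) /E' def_e.
  by apply: acyc => //; rewrite -def_e.
have vS : v \in S by rewrite inE connect0.
have sideS a b : [set a; b] \in E' -> (a \in S) = (b \in S).
  by move=> abE'; rewrite !inE (same_connect1r (sym_connect_sym (@adj_sym E')) abE').
under eq_bigr do rewrite (big_setD1 _ eE) -/E'.
rewrite (@sum_mul_involutive _ _ (flip_labels S) _ _ ((d1 + d2)%:R / x)).
- have cardE' : (#|E'| < k)%N by rewrite (cardsD1 e) eE in cardE.
  rewrite IH //; last exact: forestD1.
  by rewrite (cardsD1 e E) eE exprS mulrCA.
- exact: flip_labelsK.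
- move=> s; apply: eq_bigr => f fE'; rewrite /w.
  have /cards2P [a [b [ab def_f]]] : #|f| == 2%N.
    by rewrite edge2 //; move: fE'; rewrite in_setD1 => /andP[].
  by rewrite def_f in fE' *; rewrite d_edge_flip_labels // (sideS _ _ fE').
- by move=> s; rewrite /w def_e -mulrDl -natrD d_edge_flip_labels_cut.
Qed.

Lemma card_verts_forest E : forest E -> (#|verts E| <= 2 * #|E|)%N.
Proof.
case=> edge2 _; apply: leq_trans (leq_card_cover E).1 _.
by rewrite mulnC -sum_nat_const leq_sum // => e /edge2 ->.
Qed.

Lemma prod_d_edge_depends (R : comPzSemiRingType) d1 d2 (f : nat -> R) E :
  depends_only_on (verts E) (fun s => \prod_(e in E) f (d_edge d1 d2 s e)).
Proof.
move=> s s' ss'; apply: eq_bigr => e eE; congr (f (if _ then _ else _)).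
have ee' u : u \in e -> s u = s' u.
  by move=> ue; apply: ss'; apply/bigcupP; exists e.
by apply: eq_forallb_in => u ue; apply: eq_forallb_in => w we; rewrite !ee'.
Qed.

End Forests.

Section BalancedLabellings.
Variables (R : realFieldType) (m k : nat).
Hypothesis m_eq : m = (k + k)%N.
Implicit Types (s : {ffun 'I_m -> bool}) (V : {set 'I_m}) (F : {ffun 'I_m -> bool} -> R).

Local Notation bal := (balanced m k).

Lemma card_balanced_labels s b : s \in bal -> #|[set i | s i == b]| = k.
Proof.
rewrite inE => /eqP card_true; case: b.
  by rewrite -card_true; apply: eq_card => i; rewrite !inE eqb_id.
have -> : [set i | s i == false] = ~: [set i | s i].
  by apply/setP => i; rewrite !inE eqbF_neg.
by rewrite cardsCs finset.setCK card_ord card_true m_eq addnK.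
Qed.

Lemma balanced_tperm s x y : ([ffun i => s (tperm x y i)] \in bal) = (s \in bal).
Proof.
rewrite !inE; congr (_ == k).
have -> : [set i | [ffun i => s (tperm x y i)] i] = tperm x y @^-1: [set i | s i].
  by apply/setP => i; rewrite !inE ffunE.
by rewrite card_preimset //; apply: perm_inj.
Qed.

(* Average over the transpositions (x y), y outside V :\ x: they preserve
   balance, relabel x by s y and fix the rest of V, and at most k of these y
   carry each label. *)
Lemma sum_balanced_set_label F V x :
  x \in V -> depends_only_on V F -> (forall s, 0 <= F s) ->
  (m - #|V :\ x|)%:R * \sum_(s in bal) F s
    <= k%:R * \sum_(s in bal) (F (set_label s x true) + F (set_label s x false)).
Proof.
move=> xV dF F_ge0; set W := V :\ x.
pose swap y s : {ffun 'I_m -> bool} := [ffun i => s (tperm x y i)].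
have swapK y : involutive (swap y).
  by move=> s; apply/ffunP => i; rewrite !ffunE tpermK.
have sum_swap y : \sum_(s in bal) F (swap y s) = \sum_(s in bal) F s.
  rewrite [RHS](reindex_inj (inv_inj (swapK y))) /=.
  by apply: eq_bigl => s; rewrite balanced_tperm.
have swap_set_label y s : y \notin W -> F (swap y s) = F (set_label s x (s y)).
  move=> yW; apply: dF => i iV; rewrite !ffunE.
  have [->|ix] := eqVneq i x; first by rewrite tpermL.
  rewrite tpermD // 1?eq_sym //; apply: contraNneq yW => <-.
  by rewrite in_setD1 ix.
have -> : (m - #|W|)%:R * \sum_(s in bal) F s
          = \sum_(y in ~: W) \sum_(s in bal) F (swap y s).
  rewrite (eq_bigr _ (fun y _ => sum_swap y)) sumr_const mulr_natl.
  by rewrite (cardsCs (~: W)) finset.setCK card_ord.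
rewrite exchange_big mulr_sumr; apply: ler_sum => s s_bal /=.
have -> : \sum_(y in ~: W) F (swap y s) = \sum_(y in ~: W) F (set_label s x (s y)).
  by apply: eq_bigr => y; rewrite inE => yW; apply: swap_set_label.
apply: le_trans (_ : _ <= \sum_y F (set_label s x (s y))) _.
  by rewrite [X in _ <= X](bigID (mem (~: W))) /= lerDl sumr_ge0.
have sum_label b : \sum_(y in [set y | s y == b]) F (set_label s x (s y))
                   = k%:R * F (set_label s x b).
  rewrite (eq_bigr (fun=> F (set_label s x b))) => [|y]; last by rewrite inE => /eqP ->.
  by rewrite sumr_const card_balanced_labels // mulr_natl.
rewrite (bigID (fun y => s y)) /= mulrDr -(sum_label true) -(sum_label false).
by apply: lerD; rewrite le_eqVlt; apply/orP; left; apply/eqP/eq_bigl => y;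
  rewrite inE ?eqb_id ?eqbF_neg.
Qed.

Lemma sum_balanced_le F V : depends_only_on V F -> (forall s, 0 <= F s) ->
  (\sum_(s in bal) F s) * ((2 ^ m)%:R * (m ^_ #|V|)%:R)
    <= #|bal|%:R * m%:R ^+ #|V| * \sum_s F s.
Proof.
move Vv : #|V| => v; elim: v V F Vv => [|v IH] V F cardV dF F_ge0.
  have F_const s : F s = F [ffun=> false].
    by apply: dF => i; rewrite (cards0_eq cardV) inE.
  rewrite (eq_bigr _ (fun s _ => F_const s)).
  rewrite [X in _ <= _ * X](eq_bigr _ (fun s _ => F_const s)).
  rewrite !sumr_const card_ffun card_bool card_ord ffactn0 mulr1 expr0 mulr1.
  by rewrite -!(mulr_natl (F _)) -mulrA [F _ * _]mulrC.
have [x xV] : exists x, x \in V.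
  by apply/set0Pn; rewrite -card_gt0 cardV.
pose G s := F (set_label s x true) + F (set_label s x false).
have cardW : #|V :\ x| = v by move: cardV; rewrite (cardsD1 x) xV => -[].
have G_ge0 s : 0 <= G s by rewrite addr_ge0.
have IHG := IH _ G cardW (set_label_depends (x := x) dF) G_ge0.
have drop := sum_balanced_set_label xV dF F_ge0.
rewrite sum_set_label in IHG; rewrite cardW in drop.
have QP_ge0 : 0 <= (2 ^ m)%:R * (m ^_ v)%:R :> R by rewrite mulr_ge0.
have := ler_wpM2r QP_ge0 drop; have := ler_wpM2l (ler0n _ k) IHG.
have -> : m%:R = k%:R + k%:R :> R by rewrite m_eq natrD.
rewrite ffactnSr natrM exprSr.
lra.
Qed.

Lemma mean_balanced_le F V (r : R) : depends_only_on V F -> (forall s, 0 <= F s) ->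
  m%:R ^+ #|V| <= r * (m ^_ #|V|)%:R ->
  #|bal|%:R^-1 * \sum_(s in bal) F s <= r * ((\sum_s F s) / (2 ^ m)%:R).
Proof.
move=> dF F_ge0 expn_le.
have ffact_gt0 : 0 < (m ^_ #|V|)%:R :> R.
  by rewrite ltr0n ffact_gt0 -[X in (_ <= X)%N](card_ord m) max_card.
have pow2_gt0 : 0 < (2 ^ m)%:R :> R by rewrite ltr0n expn_gt0.
have sF_ge0 : 0 <= \sum_s F s by rewrite sumr_ge0.
have r_ge0 : 0 <= r.
  by rewrite -(pmulr_lge0 _ ffact_gt0); apply: le_trans expn_le; rewrite exprn_ge0.
have [->|bal_neq0] := eqVneq #|bal| 0%N.
  by rewrite invr0 mul0r mulr_ge0 // divr_ge0 // ltW.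
rewrite ler_pdivrMl ?ltr0n ?lt0n // !mulrA ler_pdivlMr // -(ler_pM2r ffact_gt0).
have := sum_balanced_le dF F_ge0.
have := ler_wpM2l (mulr_ge0 (ler0n _ #|bal|) sF_ge0) expn_le.
lra.
Qed.

End BalancedLabellings.

Lemma exprn_ffact_le (R : realFieldType) (m v : nat) : (v <= m)%N ->
  m%:R ^+ v * (m%:R - v%:R ^+ 2) <= m%:R * (m ^_ v)%:R :> R.
Proof.
elim: v => [|v IH] le_vm.
  by rewrite ffactn0 expr0 mul1r mulr1; have := sqr_ge0 (0%:R : R); lra.
rewrite ffactnSr natrM natrB ?(ltnW le_vm) // -natr1.
have := IH (ltnW le_vm); set a : R := m%:R; set b : R := v%:R; set P : R := _%:R.
move=> IHv; have a_ge0 : 0 <= a by rewrite ler0n.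
have b_ge0 : 0 <= b by rewrite ler0n.
have ab_ge0 : 0 <= a - b by rewrite subr_ge0 ler_nat ltnW.
have := ler_wpM2r ab_ge0 IHv.
(* [a^(v+1) (a - (b+1)^2) = a^v (a - b^2)(a - b) - a^v (ab + b^3 + a)] *)
have : 0 <= a ^+ v * (a * b + b ^+ 3 + a).
  by rewrite mulr_ge0 ?exprn_ge0 // !addr_ge0 ?mulr_ge0 ?exprn_ge0.
rewrite [a ^+ v.+1]exprSr; set M := a ^+ v; nra.
Qed.

Lemma exprn_le_ffact_double (R : realFieldType) (n v : nat) : (0 < n)%N ->
  v%:R ^+ 2 <= n%:R :> R ->
  ((2 * n)%N)%:R ^+ v <= (1 + v%:R ^+ 2 / n%:R) * ((2 * n) ^_ v)%:R :> R.
Proof.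
move=> n_gt0 v2_le_n.
have n_pos : 0 < n%:R :> R by rewrite ltr0n.
have le_vm : (v <= 2 * n)%N.
  have le_v_sqr : (v <= v ^ 2)%N.
    by case: v {v2_le_n} => // v; apply: (leq_pexp2l (ltn0Sn v) (isT : 1 <= 2)%N).
  have : (v ^ 2 <= n)%N by rewrite -(ler_nat R) natrX.
  by move/(leq_trans le_v_sqr)/leq_trans; apply; rewrite mul2n -addnn leq_addr.
have := exprn_ffact_le R le_vm; rewrite mul2n -addnn natrD.
set w := v%:R ^+ 2 / n%:R; have -> : v%:R ^+ 2 = w * n%:R :> R by rewrite divfK ?gt_eqF.
have w_ge0 : 0 <= w by rewrite divr_ge0 ?exprn_ge0 ?ler0n // ltW.
have w_le1 : w <= 1 by rewrite ler_pdivrMr // mul1r.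
set M := _ ^+ v; set P := (_ ^_ _)%:R; move=> ffact_le.
have M_ge0 : 0 <= M by rewrite exprn_ge0 // addr_ge0 // ltW.
have P_ge0 : 0 <= P by rewrite ler0n.
have n2_gt0 : 0 < n%:R + n%:R :> R by rewrite addr_gt0.
rewrite -(ler_pM2l n2_gt0).
have := ler_wpM2l (addr_ge0 ler01 w_ge0) ffact_le.
have : 0 <= M * (w * n%:R * (1 - w)).
  by rewrite mulr_ge0 // mulr_ge0 ?subr_ge0 // mulr_ge0 // ltW.
lra.
Qed.

Lemma sqr_ln_le_sqrt (R : realType) (x : R) : 1 <= x -> ln x ^+ 2 <= 16 * Num.sqrt x.
Proof.
move=> x_ge1; have x_gt0 : 0 < x by apply: lt_le_trans x_ge1.
set t := Num.sqrt (Num.sqrt x).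
have t_gt0 : 0 < t by rewrite !sqrtr_gt0.
have t4 : x = t ^+ 4.
  by rewrite (exprM t 2 2) !sqr_sqrtr ?sqrtr_ge0 // ltW.
have lnt_ge0 : 0 <= ln t.
  by rewrite -(pmulrn_lge0 _ (isT : (0 < 4)%N)) -lnXn // -t4 ln_ge0.
have lnt_le : ln t <= t.
  have := @le_ln1Dx R (t - 1); rewrite [1 + _]addrC subrK => ln_le.
  by apply: le_trans (ln_le _) _; lra.
have -> : Num.sqrt x = t ^+ 2 by rewrite sqr_sqrtr ?sqrtr_ge0.
rewrite t4 lnXn // -[ln t *+ 4]mulr_natr exprMn.
have : ln t ^+ 2 <= t ^+ 2 by rewrite ler_pXn2r // ?nnegrE // ltW.
lra.
Qed.

Theorem lemma6p13 (R : realType) (d1 d2 : nat) (C : R) :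
  (0 < d1)%N -> (0 < d2)%N -> 0 < C ->
  exists K : R, exists N : nat, forall n : nat, (N <= n)%N ->
    forall T : {set {set 'I_(2 * n)}}, is_tree T ->
      #|T|%:R <= C * ln (n%:R : R) ->
      tree_expect R d1 d2 T <=
        ((d1 + d2)%:R / (2 * n)%:R) ^+ #|T| * (1 + K * (ln (n%:R : R)) ^+ 2 / n%:R).
Proof.
move=> _ _ C_gt0; set K := 4 * C ^+ 2; set A := 64 * C ^+ 2.
have A_ge0 : 0 <= A by rewrite mulr_ge0 ?sqr_ge0.
exists K, (maxn 1 (Num.Def.archi_bound (A ^+ 2))).
move=> n; rewrite geq_max => /andP[n_gt0 n_large] T /tree_forest forestT card_T.
set L := ln (n%:R : R) in card_T *.
have n_pos : 0 < n%:R :> R by rewrite ltr0n.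
have KL2_le_n : K * L ^+ 2 <= n%:R.
  have A_le_sqrt : A <= Num.sqrt n%:R.
    rewrite -(ger0_norm A_ge0) -sqrtr_sqr ler_wsqrtr //.
    by apply: le_trans (ltW (archi_boundP _)) _; rewrite ?exprn_ge0 ?ler_nat.
  have := @sqr_ln_le_sqrt R n%:R; rewrite ler1n -/L => /(_ n_gt0).
  have := sqr_sqrtr (ltW n_pos); have := sqrtr_ge0 (n%:R : R).
  rewrite /K /A in A_le_sqrt *; nra.
have v2_le : #|verts T|%:R ^+ 2 <= K * L ^+ 2.
  have : #|verts T|%:R <= 2 * (C * L) :> R.
    by apply: le_trans (ler_wpM2l _ card_T); rewrite -?natrM ?ler_nat ?card_verts_forest.
  have := ler0n R #|verts T|; rewrite /K; nra.
have m_eq : (2 * n = n + n)%N by rewrite mul2n addnn.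
have F_ge0 s : 0 <= \prod_(e in T) ((d_edge d1 d2 s e)%:R / n%:R) :> R.
  by apply: prodr_ge0 => e _; rewrite divr_ge0 ?ler0n.
have := mean_balanced_le m_eq (@prod_d_edge_depends _ R d1 d2 (fun d => d%:R / n%:R) T)
  F_ge0 (exprn_le_ffact_double n_gt0 (le_trans v2_le KL2_le_n)).
rewrite sum_prod_d_edge_forest // [(2 ^ _)%:R * _]mulrC mulfK; last first.
  by rewrite pnatr_eq0 -lt0n expn_gt0.
move=> mean_le.
have halve : (d1 + d2)%:R / (2 * n)%:R = (d1 + d2)%:R / n%:R / 2 :> R.
  by rewrite natrM invfM mulrA mulrAC.
rewrite /tree_expect halve [X in _ <= X]mulrC; apply: le_trans mean_le _.
apply: ler_wpM2r; first by rewrite exprn_ge0 // !divr_ge0 ?ler0n.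
by rewrite lerD2l; apply: ler_wpM2r; rewrite ?invr_ge0 ?ler0n.
Qed.
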